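(* Let $d\le 3$ be a positive integer, let $\tau_1,\dots,\tau_d$ and $n_1,\dots,n_d$ be positive integers, and consider the generic $d$-degree polynomial multiparameter eigenvalue problem $P_i(x_1,\dots,x_d)\mathbf{v}_i=0$, $1\le i\le d$, where $P_i(x_1,\dots,x_d)=\sum_{i_1=0}^{\tau_1}\cdots\sum_{i_d=0}^{\tau_d}P^{(i)}_{i_1,\dots,i_d}x_1^{i_1}\cdots x_d^{i_d}$ and the entries of all the $n_i\times n_i$ coefficient matrices $P^{(i)}_{i_1,\dots,i_d}$ (over all $i$ and all multi-indices) are distinct indeterminates. Then the hidden variable tensor Dixon resultant $R(x_d)$ of this problem is nonsingular, i.e. $\det R(x_d)$ is not the zero polynomial.
   Context: Let $N=\prod_{i=1}^d n_i$. Kronecker block determinant: for a $d\times d$ array $M=(M_{ij})$ with $M_{ij}$ of size $n_i\times n_i$, $|M|_\otimes=\sum_{\sigma\in S_d}\mathrm{sgn}(\sigma)\,M_{1,\sigma(1)}\otimes\cdots\otimes M_{d,\sigma(d)}$. Tensor Dixon function (with $x_d$ hidden): with variables $s_1,\dots,s_{d-1},t_1,\dots,t_{d-1},x_d$, let $M_{ij}=P_i(t_1,\dots,t_{j-1},s_j,\dots,s_{d-1},x_d)$ for $1\le i,j\le d$, and $f_{\text{Dixon}}=|M|_\otimes/\prod_{i=1}^{d-1}(s_i-t_i)$ (for $d=1$, $f_{\text{Dixon}}=P_1(x_1)$), a matrix polynomial of degree at most $\alpha_i=i\tau_i-1$ in $s_i$ and at most $\beta_i=(d-i)\tau_i-1$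 in $t_i$. Expand $f_{\text{Dixon}}=\sum_{\mathbf{i},\mathbf{j}}A_{\mathbf{i},\mathbf{j}}(x_d)\prod_k s_k^{i_k}\prod_k t_k^{j_k}$ over $0\le i_k\le\alpha_k$, $0\le j_k\le\beta_k$. The hidden variable tensor Dixon resultant $R(x_d)$ is the square block matrix of size $N(d-1)!\prod_{k=1}^{d-1}\tau_k$ whose block columns (width $N$) are indexed by $s$-exponents $\mathbf{i}$ and block rows by $t$-exponents $\mathbf{j}$, with block $(\mathbf{j},\mathbf{i})$ equal to $A_{\mathbf{i},\mathbf{j}}(x_d)$; its entries are polynomials in $x_d$ and the indeterminates. *)

From HB Require Import structures.
From mathcomp Require Import all_boot all_order all_algebra all_fingroup.
From mathcomp Require Import mpoly.
From mathcomp Require Import zify.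
Set Implicit Arguments. Unset Strict Implicit. Unset Printing Implicit Defensive.
Import GRing.Theory.
Local Open Scope ring_scope.

(* Indexing conventions: d = m.+1.  Variables x_1..x_d are indexed by
   'I_m.+1 (x_d = ord_max is the hidden variable); s_1..s_{d-1},
   t_1..t_{d-1} are indexed by 'I_m. *)
Section DixonIndex.
Variables (m : nat) (tau n : 'I_m.+1 -> nat).

Definition wk (k : 'I_m) : 'I_m.+1 := widen_ord (leqnSn m) k.

Definition expo := {dffun forall k : 'I_m.+1, 'I_(tau k).+1}.
(* row/column indices of a Kronecker product of n_1 x .. x n_d blocks *)
Definition kidx := {dffun forall i : 'I_m.+1, 'I_(n i)}.
(* s-exponents: 0 <= i_k <= alpha_k = k tau_k - 1 (k 1-indexed) *)
Definition sexp := {dffun forall k : 'I_m, 'I_(k.+1 * tau (wk k))}.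
(* t-exponents: 0 <= j_k <= beta_k = (d - k) tau_k - 1 (k 1-indexed) *)
Definition texp := {dffun forall k : 'I_m, 'I_((m - k) * tau (wk k))}.

Lemma card_dffun_prod (I : finType) (T : I -> finType) :
  #|{: {dffun forall i : I, T i}}| = (\prod_(i : I) #|T i|)%N.
Proof.
by rewrite card_dep_ffun foldrE big_image.
Qed.

Lemma card_texp_sexp : #|{: texp * kidx}| = #|{: sexp * kidx}|.
Proof.
rewrite !card_prod /texp /sexp !card_dffun_prod.
congr (_ * _)%N.
under eq_bigr do rewrite card_ord.
under [RHS]eq_bigr do rewrite card_ord.
rewrite !big_split /=; congr (_ * _)%N.
rewrite (reindex_inj rev_ord_inj) /=.
apply: eq_bigr => k _; rewrite /=; have := ltn_ord k; lia.
Qed.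

(* index set of all the indeterminates: entry (r,c) of P^{(i)}_e *)
Definition gidx := {i : 'I_m.+1 & (expo * 'I_(n i) * 'I_(n i))%type}.

Section Ring.
Variable A : comNzRingType.
Variable coef : forall (i : 'I_m.+1) (e : expo), 'M[A]_(n i).

(* ring of polynomials in s_1..s_{d-1}, t_1..t_{d-1} over A[x_d] *)
Definition Sring := {mpoly {poly A}[m + m]}.
Definition svar (k : 'I_m) : Sring := 'X_(lshift m k).
Definition tvar (k : 'I_m) : Sring := 'X_(rshift m k).
Definition xhid : Sring := ('X : {poly A})%:MP.

Definition evalP (i : 'I_m.+1) (y : 'I_m -> Sring) : 'M[Sring]_(n i) :=
  \sum_(e : expo)
     ((\prod_(k < m) y k ^+ e (wk k)) * xhid ^+ e ord_max)
       *: map_mx (fun c : A => (c%:P : {poly A})%:MP) (coef i e).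

(* M_{ij} = P_i(t_1,..,t_{j-1}, s_j,..,s_{d-1}, x_d) *)
Definition dixonM (i j : 'I_m.+1) : 'M[Sring]_(n i) :=
  evalP i (fun k => if (k < j)%N then tvar k else svar k).

(* entries of the Kronecker block determinant |M|_(x) *)
Definition kdet (a b : kidx) : Sring :=
  \sum_(s : 'S_m.+1) (-1) ^+ s * \prod_(i < m.+1) dixonM i (s i) (a i) (b i).

Definition dixon_den : Sring := \prod_(k < m) (svar k - tvar k).

(* F is the tensor Dixon function f_Dixon = |M|_(x) / prod (s_i - t_i) *)
Definition dixon_spec (F : kidx -> kidx -> Sring) : Prop :=
  forall a b, dixon_den * F a b = kdet a b.

Definition stmono (i : sexp) (j : texp) : 'X_{1.. m + m} :=
  [multinom (match split k with inl k1 => (i k1 : nat) | inr k2 => (j k2 : nat) end)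
     | k < m + m].

(* block (j,i) is A_{i,j}(x_d); rows indexed by (j, a), columns by (i, b) *)
Definition resultant_rect (F : kidx -> kidx -> Sring) :
  'M[{poly A}]_(#|{: texp * kidx}|, #|{: sexp * kidx}|) :=
  \matrix_(r, c) let: (j, a) := enum_val r in let: (i, b) := enum_val c in
                 (F a b)@_(stmono i j).

Definition dixon_resultant (F : kidx -> kidx -> Sring) :
  'M[{poly A}]_(#|{: sexp * kidx}|) :=
  castmx (card_texp_sexp, erefl) (resultant_rect F).
End Ring.

(* the generic problem: entries of all coefficient matrices are distinct
   indeterminates of the polynomial ring K[gidx] *)
Definition gencoef (K : fieldType) (i : 'I_m.+1) (e : expo) :
  'M[{mpoly K[#|{: gidx}|]}]_(n i) :=
  \matrix_(r, c) 'X_(enum_rank (existT _ i (e, r, c) : gidx)).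

End DixonIndex.

From HB Require Import structures.
From mathcomp Require Import all_boot all_order all_algebra all_fingroup.
From mathcomp Require Import mpoly zify ring.
Set Implicit Arguments. Unset Strict Implicit. Unset Printing Implicit Defensive.
Import GRing.Theory.
Local Open Scope ring_scope.

(* Existence of f_Dixon holds for every d: columns j and j + 1 of the
   Kronecker block determinant differ only in the argument s_j versus t_j, so
   after subtracting neighbouring columns, x^k - y^k = (x - y) sum_l x^(k-1-l) y^l
   lets one divide out prod_j (s_j - t_j).
   Since det R(x_d) is a polynomial, it is nonzero as soon as one of its
   specializations is.  Take x_d = 0 and P^(i)_e = w_i(e) I, i.e. P_i = p_i I
   for scalar polynomials p_i.  Then f_Dixon becomes delta I for a polynomial
   delta in s and t, and R becomes, up to reordering, the Kronecker product of
   I with the coefficient matrix of delta.  For p = (1), (x_1^tau_1, 1) and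
   (x_2^tau_2, x_1^tau_1, 1 + x_1^tau_1 x_2^tau_2) when d = 1, 2, 3, delta is
   a sum of monomials +- s^a t^b in which every admissible s-exponent a occurs
   exactly once and the t-exponents are distinct, so this coefficient matrix
   is a signed permutation matrix. *)

(** * Determinants *)

Section ColumnOperations.
Variable R : comNzRingType.

Lemma det_col_telescope n (A : 'M[R]_n.+1) :
  \det A = \det (\matrix_(i, j)
    (A i j - if unlift ord_max j is Some k then A i (lift ord0 k) else 0)).
Proof.
set D := \matrix_(i, j) _.
pose T : 'M[R]_n.+1 := \matrix_(l, j) (j <= l)%N%:R.
have detT : \det T = 1.
  rewrite det_trig; last by apply/is_trig_mxP => l j lt_lj; rewrite mxE leqNgt lt_lj.
  by rewrite big1 // => l _; rewrite mxE leqnn.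
suff -> : A = D *m T by rewrite det_mulmx detT mulr1.
apply/matrixP => i j; rewrite !mxE.
pose f k := if (k <= n)%N then A i (inord k) else 0.
have Df l : D i l = f l - f l.+1.
  rewrite mxE /f leq_ord inord_val.
  case: unliftP => [k ->|->]; last by rewrite ltnn.
  rewrite lift_max ltn_ord; congr (_ - A i _); apply: val_inj.
  by rewrite /= inordK // ltnS.
under eq_bigr => l _ do rewrite Df mxE mulr_natr mulrb.
rewrite -big_mkcond /=.
have -> : \sum_(l < n.+1 | (j <= l)%N) (f l - f l.+1)
          = \sum_(j <= l < n.+1) (f l - f l.+1).
  by rewrite big_geq_mkord.
rewrite (@telescope_sumr_eq _ _ _ (fun k => - f k)) ?leqW ?leq_ord // => [|k _].
  by rewrite /f ltnn leq_ord inord_val oppr0 sub0r opprK.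
by rewrite opprK addrC.
Qed.

Lemma lift_max_widen n (k : 'I_n) : lift ord_max k = widen_ord (leqnSn n) k.
Proof. exact/val_inj/lift_max. Qed.

Lemma det_col_quotients n (A Q : 'M[R]_n.+1) (c : 'I_n -> R) :
  (forall i k, A i (widen_ord (leqnSn n) k) - A i (lift ord0 k)
                 = c k * Q i (widen_ord (leqnSn n) k)) ->
  (forall i, A i ord_max = Q i ord_max) ->
  \det A = (\prod_k c k) * \det Q.
Proof.
move=> dA lastA.
pose d := \row_j (if unlift ord_max j is Some k then c k else 1).
suff -> : \det A = \det (Q *m diag_mx d).
  rewrite det_mulmx det_diag big_ord_recr /= mulrC !mxE unlift_none mulr1.
  by congr (_ * _); apply: eq_bigr => k _; rewrite mxE -lift_max_widen liftK.
rewrite det_col_telescope mul_mx_diag; congr (\det _); apply/matrixP => i j.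
rewrite !mxE; case: unliftP => [k ->|->]; last by rewrite subr0 mulr1.
by rewrite lift_max_widen dA mulrC.
Qed.
End ColumnOperations.

Lemma det_mx22 (R : comNzRingType) (A : 'M[R]_2) :
  \det A = A 0 0 * A 1 1 - A 0 1 * A 1 0.
Proof.
have -> : A = \matrix_(i, j) A (inord i) (inord j).
  by apply/matrixP => i j; rewrite mxE !inord_val.
rewrite (expand_det_row _ 0) !big_ord_recr big_ord0 /= add0r /cofactor !det_mx11.
by rewrite !mxE /= expr0 expr1; ring.
Qed.

Lemma det_mx33 (R : comNzRingType) (A : 'M[R]_3) :
  \det A = A 0 0 * (A 1 1 * A 2 2 - A 1 2 * A 2 1)
         - A 0 1 * (A 1 0 * A 2 2 - A 1 2 * A 2 0)
         + A 0 2 * (A 1 0 * A 2 1 - A 1 1 * A 2 0).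
Proof.
have -> : A = \matrix_(i, j) A (inord i) (inord j).
  by apply/matrixP => i j; rewrite mxE !inord_val.
rewrite (expand_det_row _ 0) !big_ord_recr big_ord0 /= add0r /cofactor !det_mx22.
by rewrite !mxE /= expr0 expr1 expr2; ring.
Qed.

Lemma det_orthonormal_cols_neq0 (R : comNzRingType) (T S : finType)
    (eqTS : #|T| = #|S|) (f : T -> S -> R) :
  (forall c, \sum_t f t c ^+ 2 = 1) ->
  (forall t c c', c != c' -> f t c * f t c' = 0) ->
  \det (castmx (eqTS, erefl) (\matrix_(r, c) f (enum_val r) (enum_val c))
         : 'M_#|S|) != 0.
Proof.
move=> f_norm f_orth; set M := castmx _ _.
have MTM : M^T *m M = 1%:M.
  apply/matrixP => c c'; rewrite !mxE.
  rewrite (reindex (fun t => cast_ord eqTS (enum_rank t))) /=; last first.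
    exists (fun r => enum_val (cast_ord (esym eqTS) r)) => x _.
      by rewrite cast_ordK enum_rankK.
    by rewrite enum_valK cast_ordKV.
  under eq_bigr => t _ do
    rewrite !mxE !castmxE /= !mxE cast_ordK enum_rankK !cast_ord_id.
  have [<-|ne_cc'] := eqVneq c c'.
    by rewrite -(f_norm (enum_val c)); apply: eq_bigr => t _; rewrite expr2.
  rewrite big1 // => t _; apply: f_orth.
  by apply: contra ne_cc' => /eqP /enum_val_inj ->.
have detM2 : \det M * \det M = 1 by rewrite -{1}det_tr -det_mulmx MTM det1.
by apply: contra_eq_neq detM2 => ->; rewrite mul0r eq_sym oner_neq0.
Qed.

(** * The Dixon function *)

Definition subXX_quo (R : comNzRingType) (x y : R) k :=
  \sum_(l < k) x ^+ (k.-1 - l) * y ^+ l.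

Lemma subrXX_quo (R : comNzRingType) (x y : R) k :
  x ^+ k - y ^+ k = (x - y) * subXX_quo x y k.
Proof. exact: subrXX. Qed.

Section DixonFunction.
Variables (m : nat) (tau n : 'I_m.+1 -> nat) (A : comNzRingType).
Variable coef : forall (i : 'I_m.+1) (e : expo tau), 'M[A]_(n i).
Local Notation S := (Sring m A).

Definition dixon_args (j : 'I_m.+1) (k : 'I_m) : S :=
  if (k < j)%N then tvar A k else svar A k.

Definition evalP_quo (i : 'I_m.+1) (y y' : 'I_m -> S) (k : 'I_m) : 'M[S]_(n i) :=
  \sum_(e : expo tau)
     ((\prod_(l < m | l != k) y l ^+ e (wk l)) * subXX_quo (y k) (y' k) (e (wk k))
        * xhid m A ^+ e ord_max)
       *: map_mx (fun c : A => (c%:P : {poly A})%:MP) (coef i e).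

Lemma evalPB i (y y' : 'I_m -> S) k :
  (forall l, l != k -> y l = y' l) ->
  evalP coef i y - evalP coef i y' = (y k - y' k) *: evalP_quo i y y' k.
Proof.
move=> eq_y; rewrite /evalP /evalP_quo -sumrB scaler_sumr; apply: eq_bigr => e _.
rewrite -scalerBl scalerA; congr (_ *: _).
rewrite (bigD1 k) //= [\prod_(l < m) y' l ^+ _](bigD1 k) //=.
under [\prod_(l < m | l != k) y' l ^+ _]eq_bigr => l /eq_y <- do [].
set P := \prod_(_ < _ | _) _.
transitivity ((y k ^+ e (wk k) - y' k ^+ e (wk k)) * P * xhid m A ^+ e ord_max).
  by ring.
by rewrite subrXX_quo; ring.
Qed.

Lemma dixonMB i k :
  dixonM coef i (wk k) - dixonM coef i (lift ord0 k) =
  (svar A k - tvar A k)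
    *: evalP_quo i (dixon_args (wk k)) (dixon_args (lift ord0 k)) k.
Proof.
rewrite (@evalPB i (dixon_args (wk k)) (dixon_args (lift ord0 k)) k) => [|l ne_lk].
  by rewrite /dixon_args /= ltnn ltnSn.
by rewrite /dixon_args /= ltnS [(l <= k)%N]leq_eqVlt val_eqE (negPf ne_lk).
Qed.

Lemma kdetE a b :
  kdet coef a b = \det (\matrix_(i, j) dixonM coef i j (a i) (b i)).
Proof.
apply: eq_bigr => s _; congr (_ * _).
by apply: eq_bigr => i _; rewrite mxE.
Qed.

Definition dixon_quo_mx (a b : kidx n) : 'M[S]_m.+1 :=
  \matrix_(i, j)
    if unlift ord_max j is Some k
    then evalP_quo i (dixon_args (wk k)) (dixon_args (lift ord0 k)) k (a i) (b i)
    else dixonM coef i ord_max (a i) (b i).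

Definition dixon_fun (a b : kidx n) : S := \det (dixon_quo_mx a b).

Lemma dixon_fun_spec : dixon_spec coef dixon_fun.
Proof.
move=> a b; rewrite kdetE.
rewrite (@det_col_quotients _ _ _ (dixon_quo_mx a b) (fun k => svar A k - tvar A k)) //.
  move=> i k; rewrite !mxE -lift_max_widen liftK.
  by have /matrixP/(_ (a i) (b i)) := dixonMB i k; rewrite !mxE lift_max_widen.
by move=> i; rewrite !mxE unlift_none.
Qed.
End DixonFunction.

(** * Specialization *)

Lemma mpolyXB_neq0 (K : fieldType) N (i j : 'I_N) :
  i != j -> 'X_i - 'X_j != 0 :> {mpoly K[N]}.
Proof.
move=> ne_ij; rewrite subr_eq0; apply: contra_neq ne_ij => /(congr1 (mcoeff U_(i))).
rewrite !mcoeffX eqxx eq_mnm1 eq_sym.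
by case: eqP => //= _ /eqP; rewrite oner_eq0.
Qed.

Lemma prodr_eq_dffun (R : comNzRingType) (I : finType) (T : I -> finType)
    (a b : {dffun forall i, T i}) :
  \prod_i ((a i == b i)%:R : R) = (a == b)%:R.
Proof.
have [->|/eqP ne_ab] := eqVneq a b; first by rewrite big1 // => i _; rewrite eqxx.
have [i ne_abi] : exists i, a i != b i.
  apply/existsP/contraT => /existsPn eq_ab; case: ne_ab; apply/ffunP => i.
  exact/eqP/negbNE/eq_ab.
by rewrite (bigD1 i) //= (negPf ne_abi) mul0r.
Qed.

Definition orthonormal_coefs (K : fieldType) m (tau : 'I_m.+1 -> nat)
    (delta : {mpoly K[m + m]}) :=
  (forall i : sexp tau, \sum_(j : texp tau) delta@_(stmono i j) ^+ 2 = 1) /\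
  (forall (i i' : sexp tau) (j : texp tau), i != i' ->
     delta@_(stmono i j) * delta@_(stmono i' j) = 0).

Section Specialization.
Variables (K : fieldType) (m : nat) (tau n : 'I_m.+1 -> nat).
Variable w : 'I_m.+1 -> expo tau -> K.
Local Notation GA := {mpoly K[#|{: gidx tau n}|]}.
Local Notation KS := {mpoly K[m + m]}.

(* x_d := 0 and P^(i)_e := w i e * I *)
Definition sp_point (x : 'I_#|{: gidx tau n}|) : K :=
  let: existT i (e, r, c) := enum_val x in (r == c)%:R * w i e.

Definition sp_coef : {rmorphism {poly GA} -> K} := meval sp_point \o horner_eval 0.
Definition sp : {rmorphism Sring m GA -> KS} := map_mpoly sp_coef.

Definition sp_poly (i : 'I_m.+1) (y : 'I_m -> KS) : KS :=
  \sum_(e : expo tau) (\prod_(k < m) y k ^+ e (wk k)) * 0 ^+ e ord_max * (w i e)%:MP.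

Definition sp_args (j : 'I_m.+1) (k : 'I_m) : KS :=
  if (k < j)%N then 'X_(rshift m k) else 'X_(lshift m k).

Definition sp_den : KS := \prod_(k < m) ('X_(lshift m k) - 'X_(rshift m k)).

Lemma sp_dixon_args j k : sp (dixon_args GA j k) = sp_args j k.
Proof. by rewrite /dixon_args /sp_args; case: ifP => _; apply: map_mpolyX. Qed.

Lemma sp_evalP i (y : 'I_m -> Sring m GA) y' r c :
  (forall k, sp (y k) = y' k) ->
  sp (evalP (gencoef n K) i y r c) = (r == c)%:R * sp_poly i y'.
Proof.
move=> sp_y; rewrite summxE rmorph_sum mulr_sumr; apply: eq_bigr => e _.
rewrite !mxE !rmorphM rmorph_prod rmorphXn /= !map_mpolyC /= !horner_evalE.
rewrite hornerX hornerC
 mevalXU /sp_point enum_rankK meval0 mpolyCM mpolyC_nat.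
under eq_bigr => k _ do rewrite rmorphXn sp_y.
ring.
Qed.

Lemma sp_kdet a b :
  sp (kdet (gencoef n K) a b) =
  (a == b)%:R * \det (\matrix_(i, j) sp_poly i (sp_args j)).
Proof.
pose d := \row_i ((a i == b i)%:R : KS).
rewrite kdetE -det_map_mx -prodr_eq_dffun.
have -> : \prod_i ((a i == b i)%:R : KS) = \det (diag_mx d).
  by rewrite det_diag; apply: eq_bigr => i _; rewrite mxE.
rewrite -det_mulmx mul_diag_mx; congr (\det _); apply/matrixP => i j.
by rewrite !mxE (sp_evalP _ _ (sp_dixon_args j)).
Qed.

Lemma sp_dixon_den : sp (dixon_den m GA) = sp_den.
Proof.
rewrite rmorph_prod; apply: eq_bigr => k _.
by rewrite rmorphB; congr (_ - _); apply: map_mpolyX.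
Qed.

Lemma sp_den_neq0 : sp_den != 0.
Proof.
by rewrite prodf_seq_neq0; apply/allP => k _; rewrite mpolyXB_neq0 // eq_lrshift.
Qed.

Section Resultant.
Variables (delta : KS) (F : kidx n -> kidx n -> Sring m GA).
Hypothesis den_delta : sp_den * delta = \det (\matrix_(i, j) sp_poly i (sp_args j)).
Hypothesis F_spec : dixon_spec (gencoef n K) F.

Lemma sp_dixon_fun a b : sp (F a b) = (a == b)%:R * delta.
Proof.
apply: (mulfI sp_den_neq0).
by rewrite -sp_dixon_den -rmorphM F_spec sp_kdet -den_delta sp_dixon_den mulrCA.
Qed.

Lemma dixon_resultant_neq0_of_orthonormal :
  orthonormal_coefs tau delta -> \det (dixon_resultant tau F) != 0.
Proof.
case=> delta_norm delta_orth.
pose f (t : texp tau * kidx n) (s : sexp tau * kidx n) :=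
  let: (j, a) := t in let: (i, b) := s in (a == b)%:R * delta@_(stmono i j).
have sp_res : map_mx sp_coef (dixon_resultant tau F) =
   castmx (card_texp_sexp tau n, erefl) (\matrix_(r, c) f (enum_val r) (enum_val c)).
  rewrite /dixon_resultant map_castmx; congr castmx; apply/matrixP => r c.
  rewrite !mxE /f; case: (enum_val r) => j a; case: (enum_val c) => i b.
  by rewrite -mcoeff_map_mpoly sp_dixon_fun -mpolyC_nat mcoeffCM.
suff : \det (map_mx sp_coef (dixon_resultant tau F)) != 0.
  by rewrite det_map_mx; apply: contra_neq => ->; rewrite rmorph0.
rewrite sp_res; apply: det_orthonormal_cols_neq0 => [[i b]|[j a] [i b] [i' b'] ne].
  transitivity (\sum_j \sum_a f (j, a) (i, b) ^+ 2).
    by rewrite pair_bigA; apply: eq_bigr => -[j a].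
  rewrite -(delta_norm i); apply: eq_bigr => j _.
  rewrite (bigD1 b) //= eqxx mul1r big1 ?addr0 // => a /negPf ->.
  by rewrite mul0r expr0n.
move: ne => /=; have [<-|_] := eqVneq a b; last by rewrite !mul0r.
have [<-|_] := eqVneq a b'; last by rewrite mul0r mulr0.
by rewrite !mul1r => ne; apply: delta_orth; apply: contra ne => /eqP ->.
Qed.
End Resultant.
End Specialization.

(** * Signed monomial sums *)

Definition st_mnm m (fs ft : 'I_m -> nat) : 'X_{1.. m + m} :=
  [multinom (match split k with inl k1 => fs k1 | inr k2 => ft k2 end) | k < m + m].

Lemma stmonoE m (tau : 'I_m.+1 -> nat) (i : sexp tau) (j : texp tau) :
  stmono i j = st_mnm (fun k => i k) (fun k => j k).
Proof. by []. Qed.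

Lemma st_mnm_lshift m fs ft (k : 'I_m) : st_mnm fs ft (lshift m k) = fs k.
Proof. by rewrite mnmE (unsplitK (inl k)). Qed.

Lemma st_mnm_rshift m fs ft (k : 'I_m) : st_mnm fs ft (rshift m k) = ft k.
Proof. by rewrite mnmE (unsplitK (inr k)). Qed.

Lemma mpolyX_st_mnm (R : comNzRingType) m fs ft :
  'X_[st_mnm fs ft] = (\prod_(k < m) 'X_(lshift m k) ^+ fs k)
                      * \prod_(k < m) 'X_(rshift m k) ^+ ft k :> {mpoly R[m + m]}.
Proof.
rewrite mpolyXE_id big_split_ord /=.
by congr (_ * _); apply: eq_bigr => k _; rewrite ?st_mnm_lshift ?st_mnm_rshift.
Qed.

Lemma eq_st_mnm m (fs ft fs' ft' : 'I_m -> nat) :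
  (st_mnm fs ft == st_mnm fs' ft') =
  [forall k, fs k == fs' k] && [forall k, ft k == ft' k].
Proof.
apply/eqP/andP => [eq_st|[/forallP eq_s /forallP eq_t]].
  split; apply/forallP => k; apply/eqP.
    by rewrite -(st_mnm_lshift fs ft) eq_st st_mnm_lshift.
  by rewrite -(st_mnm_rshift fs ft) eq_st st_mnm_rshift.
by apply/mnmP => k; rewrite !mnmE; case: (split k) => k'; apply/eqP.
Qed.

Section SignedMonomialSum.
Variables (K : fieldType) (m : nat) (P : finType).
Variables (eps : P -> K) (fs ft : P -> 'I_m -> nat).

Definition signed_mono_sum : {mpoly K[m + m]} :=
  \sum_p eps p *: 'X_[st_mnm (fs p) (ft p)].

(* [fs] is a bijection onto the s-exponents and [ft] an injection into the
   t-exponents, so the coefficient matrix of [signed_mono_sum] is a signed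
   permutation matrix. *)
Variable tau : 'I_m.+1 -> nat.
Hypothesis eps_sq : forall p, eps p ^+ 2 = 1.
Hypothesis fs_inj : forall p q, fs p =1 fs q -> p = q.
Hypothesis ft_inj : forall p q, ft p =1 ft q -> p = q.
Hypothesis fs_onto : forall i : sexp tau, exists p, fs p =1 (fun k => i k).
Hypothesis ft_bound : forall p k, (ft p k < (m - k) * tau (wk k))%N.

Lemma mcoeff_signed_mono_sum p (i : sexp tau) (j : texp tau) :
  fs p =1 (fun k => i k) ->
  signed_mono_sum@_(stmono i j) = [forall k, ft p k == j k]%:R * eps p.
Proof.
move=> fs_pi; rewrite raddf_sum (bigD1 p) //= big1 => [|q ne_qp].
  rewrite addr0 mcoeffZ mcoeffX stmonoE eq_st_mnm mulrC.
  suff -> : [forall k, fs p k == i k] by [].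
  by apply/forallP => k; rewrite fs_pi.
rewrite mcoeffZ mcoeffX stmonoE eq_st_mnm.
case: forallP => [fs_qi|]; last by rewrite mulr0.
by case/eqP: ne_qp; apply: fs_inj => k; rewrite fs_pi; apply/eqP.
Qed.

Lemma signed_mono_sum_orthonormal : orthonormal_coefs tau signed_mono_sum.
Proof.
split=> [i|i i' j ne_ii'].
  have [p fs_pi] := fs_onto i.
  under eq_bigr => j _ do
    rewrite (mcoeff_signed_mono_sum _ fs_pi) exprMn eps_sq mulr1 expr2 -natrM
            mulnb andbb.
  pose j0 : texp tau := [ffun k => Ordinal (ft_bound p k)].
  rewrite (bigD1 j0) //= big1 ?addr0 => [|j ne_jj0].
    by case: forallP => // -[] k; rewrite ffunE.
  case: forallP => // ft_pj; case/eqP: ne_jj0.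
  by apply/ffunP => k; apply: val_inj; rewrite ffunE /= (eqP (ft_pj k)).
have [p fs_pi] := fs_onto i; have [p' fs_p'i'] := fs_onto i'.
rewrite (mcoeff_signed_mono_sum _ fs_pi) (mcoeff_signed_mono_sum _ fs_p'i').
case: forallP => [ft_pj|]; last by rewrite !mul0r.
case: forallP => [ft_p'j|]; last by rewrite mul0r mulr0.
have eq_pp' : p = p' by apply: ft_inj => k; rewrite (eqP (ft_pj k)) (eqP (ft_p'j k)).
case/eqP: ne_ii'; apply/ffunP => k; apply: val_inj.
by rewrite /= -(fs_pi k) -(fs_p'i' k) eq_pp'.
Qed.
End SignedMonomialSum.

(** * The cases d = 1, 2, 3 *)

Definition expo_on m (tau : 'I_m.+1 -> nat) (S : pred 'I_m.+1) : expo tau :=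
  [ffun k => if S k then ord_max else ord0].

Lemma expo_onE m tau S k : (@expo_on m tau S k : nat) = if S k then tau k else 0%N.
Proof. by rewrite ffunE; case: (S k). Qed.

Definition weights_of (K : fieldType) m (tau : 'I_m.+1 -> nat)
    (tg : 'I_m.+1 -> seq (expo tau)) (i : 'I_m.+1) (e : expo tau) : K :=
  \sum_(t <- tg i) (e == t)%:R.

Lemma sp_poly_weights_of (K : fieldType) m tau (tg : 'I_m.+1 -> seq (expo tau)) i y :
  sp_poly (weights_of K tg) i y =
  \sum_(t <- tg i) (\prod_(k < m) y k ^+ t (wk k)) * 0 ^+ t ord_max.
Proof.
rewrite /sp_poly; under eq_bigr => e _ do rewrite raddf_sum mulr_sumr.
rewrite exchange_big /=; apply: eq_bigr => t _.
rewrite (bigD1 t) //= eqxx mpolyC1 mulr1 [X in _ + X]big1 ?addr0 // => e /negPf ->.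
by rewrite mpolyC0 mulr0.
Qed.

Lemma sexp_ltn m (tau : 'I_m.+1 -> nat) (i : sexp tau) (k : 'I_m) b :
  (k.+1 * tau (wk k))%N = b -> (i k < b)%N.
Proof. by move=> <-. Qed.

Lemma eqfun_ord1 (T : Type) (f g : 'I_1 -> T) : f ord0 = g ord0 -> f =1 g.
Proof. by move=> eq_fg k; rewrite (ord1 k). Qed.

Lemma ord2_cases (k : 'I_2) : k = 0 \/ k = 1.
Proof. by case: k => -[|[|//]] ?; [left | right]; apply: val_inj. Qed.

Lemma eqfun_ord2 (T : Type) (f g : 'I_2 -> T) : f 0 = g 0 -> f 1 = g 1 -> f =1 g.
Proof. by move=> eq0 eq1 k; case: (ord2_cases k) => ->. Qed.

Lemma prod_ord2 (R : comNzRingType) (F : 'I_2 -> R) : \prod_(k < 2) F k = F 0 * F 1.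
Proof.
by rewrite big_ord_recr big_ord1; congr (F _ * F _); apply: val_inj.
Qed.

Section DixonD1.
Variables (K : fieldType) (tau n : 'I_1 -> nat).

Definition d1_weights := weights_of K (fun _ : 'I_1 => [:: expo_on tau pred0]).
Definition d1_exps (_ : unit) (k : 'I_0) := 0%N.

Lemma d1_den_delta :
  sp_den K 0 * signed_mono_sum (fun _ => 1) d1_exps d1_exps =
  \det (\matrix_(i, j) sp_poly d1_weights i (sp_args K j)).
Proof.
rewrite det_mx11 mxE sp_poly_weights_of big_seq1 expo_onE /sp_den.
by rewrite /signed_mono_sum (big_pred1 tt) // scale1r mpolyX_st_mnm !big_ord0 !mul1r.
Qed.

Lemma dixon_resultant_neq0_d1 F :
  dixon_spec (@gencoef 0 tau n K) F -> \det (dixon_resultant tau F) != 0.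
Proof.
move=> F_spec; apply: (dixon_resultant_neq0_of_orthonormal d1_den_delta F_spec).
apply: signed_mono_sum_orthonormal => [p|[] []|[] []|i|p []] //.
  exact: expr1n.
by exists tt => -[].
Qed.
End DixonD1.

Section DixonD2.
Variables (K : fieldType) (tau n : 'I_2 -> nat).
Local Notation s := ('X_(lshift 1 0) : {mpoly K[1 + 1]}).
Local Notation t := ('X_(rshift 1 0) : {mpoly K[1 + 1]}).
Local Notation a := (tau 0).

(* p_1 = x_1^tau_1, p_2 = 1 *)
Definition d2_weights :=
  weights_of K (fun i : 'I_2 => [:: expo_on tau [pred k | (i == 0) && (k == 0)]]).
Definition d2_fs (u : 'I_a) (_ : 'I_1) := (a.-1 - u)%N.
Definition d2_ft (u : 'I_a) (_ : 'I_1) := (u : nat).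

Lemma d2_tau_wk : tau (wk ord0) = a.
Proof. by congr tau; apply: val_inj. Qed.

Lemma d2_den_delta :
  sp_den K 1 * signed_mono_sum (fun _ => 1) d2_fs d2_ft =
  \det (\matrix_(i, j) sp_poly d2_weights i (sp_args K j)).
Proof.
rewrite det_mx22 !mxE !sp_poly_weights_of !big_seq1 /sp_den /sp_args.
rewrite !big_ord1 !expo_onE /= d2_tau_wk !expr0 !mulr1 subrXX_quo.
congr (_ * _); apply: eq_bigr => u _.
by rewrite scale1r mpolyX_st_mnm !big_ord1.
Qed.

Lemma dixon_resultant_neq0_d2 F :
  dixon_spec (@gencoef 1 tau n K) F -> \det (dixon_resultant tau F) != 0.
Proof.
move=> F_spec; apply: (dixon_resultant_neq0_of_orthonormal d2_den_delta F_spec).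
apply: signed_mono_sum_orthonormal => [p|u v|u v|i|u k]; rewrite ?expr1n //.
- move=> /(_ ord0) eq_uv; apply: ord_inj; move: eq_uv; rewrite /d2_fs.
  by have := ltn_ord u; have := ltn_ord v; lia.
- by move=> /(_ ord0); apply: ord_inj.
- have lti : (i ord0 < a)%N by apply: sexp_ltn; rewrite mul1n d2_tau_wk.
  have ltp : (a.-1 - i ord0 < a)%N by lia.
  by exists (Ordinal ltp); apply: eqfun_ord1; rewrite /d2_fs /= in lti *; lia.
- by rewrite (ord1 k) d2_tau_wk /= subn0 mul1n; apply: ltn_ord.
Qed.
End DixonD2.

Section DixonD3.
Variables (K : fieldType) (tau n : 'I_3 -> nat).
Local Notation s0 := ('X_(lshift 2 0) : {mpoly K[2 + 2]}).
Local Notation s1 := ('X_(lshift 2 1) : {mpoly K[2 + 2]}).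
Local Notation t0 := ('X_(rshift 2 0) : {mpoly K[2 + 2]}).
Local Notation t1 := ('X_(rshift 2 1) : {mpoly K[2 + 2]}).
Local Notation a := (tau 0).
Local Notation b := (tau 1).

(* p_1 = x_2^tau_2, p_2 = x_1^tau_1, p_3 = 1 + x_1^tau_1 x_2^tau_2 *)
Definition d3_weights :=
  weights_of K (fun i : 'I_3 =>
    if i == 0 then [:: expo_on tau (pred1 1)]
    else if i == 1 then [:: expo_on tau (pred1 0)]
    else [:: expo_on tau pred0; expo_on tau (predC1 2)]).

Definition nat2 (x y : nat) (k : 'I_2) := if k == 0 then x else y.

Definition d3_eps (p : 'I_a * 'I_b * bool) : K := if p.2 then 1 else -1.
Definition d3_fs (p : 'I_a * 'I_b * bool) :=
  nat2 (a.-1 - p.1.1) (b.-1 - p.1.2 + p.2 * b)%N.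
Definition d3_ft (p : 'I_a * 'I_b * bool) := nat2 (p.1.1 + p.2 * a)%N p.1.2.

Lemma d3_tau_wk0 : tau (wk 0) = a.
Proof. by congr tau; apply: val_inj. Qed.

Lemma d3_tau_wk1 : tau (wk 1) = b.
Proof. by congr tau; apply: val_inj. Qed.

Lemma mpolyX_nat2 x0 x1 y0 y1 :
  'X_[st_mnm (nat2 x0 x1) (nat2 y0 y1)] = s0 ^+ x0 * s1 ^+ x1 * (t0 ^+ y0 * t1 ^+ y1).
Proof. by rewrite mpolyX_st_mnm !prod_ord2. Qed.

Lemma d3_signed_mono_sum :
  signed_mono_sum d3_eps d3_fs d3_ft =
  subXX_quo s0 t0 a * subXX_quo s1 t1 b * (t0 ^+ a * s1 ^+ b - 1).
Proof.
transitivity (\sum_u \sum_v \sum_(c : bool)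
                d3_eps (u, v, c) *: 'X_[st_mnm (d3_fs (u, v, c)) (d3_ft (u, v, c))]).
  by rewrite pair_big /= pair_big /=; apply: eq_bigr => -[[u v] c].
rewrite -mulrA mulr_suml; apply: eq_bigr => u _.
rewrite mulr_suml mulr_sumr; apply: eq_bigr => v _.
rewrite big_bool /d3_eps /d3_fs /d3_ft /= !mpolyX_nat2 scale1r scaleN1r.
rewrite mul1n mul0n !addn0 !exprD; ring.
Qed.

Lemma d3_den_delta :
  sp_den K 2 * signed_mono_sum d3_eps d3_fs d3_ft =
  \det (\matrix_(i, j) sp_poly d3_weights i (sp_args K j)).
Proof.
rewrite det_mx33 !mxE !sp_poly_weights_of /= !big_cons !big_nil /sp_den /sp_args.
rewrite !prod_ord2 !expo_onE /= d3_tau_wk0 d3_tau_wk1 d3_signed_mono_sum !expr0.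
transitivity ((s0 ^+ a - t0 ^+ a) * (s1 ^+ b - t1 ^+ b) * (t0 ^+ a * s1 ^+ b - 1)).
  by rewrite !subrXX_quo; ring.
by ring.
Qed.

Lemma d3_fs_onto x0 x1 :
  (x0 < a)%N -> (x1 < b + b)%N -> exists p, d3_fs p 0 = x0 /\ d3_fs p 1 = x1.
Proof.
move=> lt0 lt1; have ltu : (a.-1 - x0 < a)%N by lia.
have [le_bx1|lt_x1b] := leqP b x1.
  have ltv : (b.-1 - (x1 - b) < b)%N by lia.
  by exists (Ordinal ltu, Ordinal ltv, true); rewrite /d3_fs /nat2 /=; split; lia.
have ltv : (b.-1 - x1 < b)%N by lia.
by exists (Ordinal ltu, Ordinal ltv, false); rewrite /d3_fs /nat2 /=; split; lia.
Qed.

Lemma dixon_resultant_neq0_d3 F :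
  dixon_spec (@gencoef 2 tau n K) F -> \det (dixon_resultant tau F) != 0.
Proof.
move=> F_spec; apply: (dixon_resultant_neq0_of_orthonormal d3_den_delta F_spec).
apply: signed_mono_sum_orthonormal => [[? []]|[[u v] c] [[u' v'] c'] eq_fs|
                                        [[u v] c] [[u' v'] c'] eq_ft|i|[[u v] c] k].
- exact: expr1n.
- by rewrite /d3_eps /= sqrrN expr1n.
- move: (eq_fs 0) (eq_fs 1) => {eq_fs}; rewrite /d3_fs /nat2 /=.
  have := ltn_ord u; have := ltn_ord u'; have := ltn_ord v; have := ltn_ord v'.
  by case: c c' => -[] /= *; (exfalso; lia) || (congr (_, _, _); apply: ord_inj; lia).
- move: (eq_ft 0) (eq_ft 1) => {eq_ft}; rewrite /d3_ft /nat2 /=.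
  have := ltn_ord u; have := ltn_ord u'.
  by case: c c' => -[] /= *; (exfalso; lia) || (congr (_, _, _); apply: ord_inj; lia).
- have lt0 : (i 0%R < a)%N by apply: sexp_ltn; rewrite /= mul1n d3_tau_wk0.
  have lt1 : (i 1%R < b + b)%N by apply: sexp_ltn; rewrite /= d3_tau_wk1 mul2n addnn.
  have [p [fs_p0 fs_p1]] := d3_fs_onto lt0 lt1.
  by exists p; apply: eqfun_ord2.
- have := ltn_ord u; have := ltn_ord v.
  by case: (ord2_cases k) => ->; rewrite /d3_ft /nat2 /= ?d3_tau_wk0 ?d3_tau_wk1;
     case: c; lia.
Qed.
End DixonD3.

Unset Implicit Arguments.

Theorem theorem4p3 (K : fieldType) (m : nat) (tau n : 'I_m.+1 -> nat) :
  [pchar K] =i pred0 ->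
  (m.+1 <= 3)%N ->
  (forall k, 0 < tau k)%N ->
  (forall i, 0 < n i)%N ->
  (exists F, dixon_spec (@gencoef m tau n K) F) /\
  (forall F, dixon_spec (@gencoef m tau n K) F ->
     \det (@dixon_resultant m tau n _ F) != 0).
Proof.
move=> _ le_d3 _ _; split.
  by exists (dixon_fun (@gencoef m tau n K)); apply: dixon_fun_spec.
case: m tau n le_d3 => [|[|[|m]]] tau n // _.
- exact: dixon_resultant_neq0_d1.
- exact: dixon_resultant_neq0_d2.
- exact: dixon_resultant_neq0_d3.
Qed.
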